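(* Let $k\in\mathbb{Z}$ and $\imath,q\in\mathbb{Z}_{>1}$. The rational polygon $\mathrm{conv}((0,0),(k,\imath),(k+1/q,\imath))$ is canonical if and only if there is an integer $c$ with $0<c<q$ and $kc\equiv-1\bmod \imath$.
   Context: For rationals $a<b$ and $\imath\in\mathbb{Z}_{>1}$, the polygon $\mathrm{conv}((0,0),(a,\imath),(b,\imath))$ is $\mathbb{Q}$-Gorenstein of index $\imath$ (with $\alpha=(0,1)$), and it is called canonical if every lattice point $p\neq(0,0)$ in it satisfies $p_2=\imath$, i.e. it contains no lattice point $p$ with $0<p_2<\imath$. *)

From HB Require Import structures.
From mathcomp Require Import all_boot all_order all_algebra.
Set Implicit Arguments. Unset Strict Implicit. Unset Printing Implicit Defensive.
Import Order.TTheory GRing.Theory Num.Theory.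
Local Open Scope ring_scope.

(* p lies in conv((0,0),(a,i),(b,i)) in Q^2: p is a convex combination
   l0*(0,0) + l1*(a,i) + l2*(b,i) with l0 = 1 - l1 - l2 >= 0. *)
Definition in_triangle (a b : rat) (i : int) (p : rat * rat) : Prop :=
  exists l1 l2 : rat,
    [/\ 0 <= l1, 0 <= l2, l1 + l2 <= 1,
        p.1 = l1 * a + l2 * b & p.2 = l1 * i%:~R + l2 * i%:~R].

Definition canonical_poly (a b : rat) (i : int) : Prop :=
  forall p : int * int,
    in_triangle a b i (p.1%:~R, p.2%:~R) -> p <> (0, 0) -> p.2 = i.

From HB Require Import structures.
From mathcomp Require Import all_boot all_order all_algebra.
From mathcomp Require Import zify ring lra.
Set Implicit Arguments. Unset Strict Implicit.
Import Order.TTheory GRing.Theory Num.Theory.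
Local Open Scope ring_scope.

(* Clearing denominators, the lattice point (x, h) lies in the triangle iff
   0 <= h <= i and 0 <= q r <= h, where r = x i - k h.  So the polygon is
   canonical iff no such point has 0 < h < i.  A point with r = 0 exists iff
   gcd(k, i) > 1; for k invertible mod i, a point with r = 1 is (x, c) for
   the representative c in ]0, i[ of -1/k, and it is low iff q <= c.
   Conversely, given kc = -1 mod i with 0 < c < q, a low point would make
   c r - h a multiple of i strictly between -i and 0. *)

Definition low_lattice_point (k i q x h : int) : Prop :=
  [/\ 0 < h, h < i, 0 <= q * (x * i - k * h) & q * (x * i - k * h) <= h].

Lemma in_triangle_latticeE (k i q x h : int) : 0 < i -> 0 < q ->
  in_triangle k%:~R (k%:~R + 1 / q%:~R) i (x%:~R, h%:~R) <->
  [/\ 0 <= h, h <= i, 0 <= q * (x * i - k * h) & q * (x * i - k * h) <= h].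
Proof.
move=> i_gt0 q_gt0.
have qQ_gt0 : (0 : rat) < q%:~R by rewrite ltr0z.
have iQ_gt0 : (0 : rat) < i%:~R by rewrite ltr0z.
have qQ_neq0 : q%:~R != 0 :> rat by rewrite gt_eqF.
have iQ_neq0 : i%:~R != 0 :> rat by rewrite gt_eqF.
rewrite -!(ler_int rat) !intrM intrB !intrM.
set r := (x%:~R * i%:~R - k%:~R * h%:~R : rat).
split.
- move=> [l1 [l2 [l1_ge0 l2_ge0 l12_le1 /= ex eh]]].
  (* the barycentric coordinates are l1 + l2 = h / i and l2 = q r / i *)
  have qr_eq : q%:~R * r = l2 * i%:~R.
    by rewrite /r ex eh; field; rewrite ?qQ_neq0 ?iQ_neq0.
  have h_eq : h%:~R = (l1 + l2) * i%:~R :> rat by rewrite eh; ring.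
  rewrite qr_eq h_eq; split; [apply: mulr_ge0; lra | nra |
    apply: mulr_ge0; lra | nra].
- move=> [h_ge0 h_le_i qr_ge0 qr_le_h].
  exists (h%:~R / i%:~R - q%:~R * r / i%:~R), (q%:~R * r / i%:~R); split.
  + rewrite -mulrBl; apply: divr_ge0; lra.
  + apply: divr_ge0; lra.
  + by rewrite addrNK ler_pdivrMr // mul1r.
  + by rewrite /= /r; field; rewrite ?qQ_neq0 ?iQ_neq0.
  + by rewrite /=; field; rewrite ?qQ_neq0 ?iQ_neq0.
Qed.

Lemma canonical_polyP (k i q : int) : 0 < i -> 0 < q ->
  canonical_poly k%:~R (k%:~R + 1 / q%:~R) i <->
  forall x h, ~ low_lattice_point k i q x h.
Proof.
move=> i_gt0 q_gt0; split.
- move=> can x h [h_gt0 h_lt_i qr_ge0 qr_le_h].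
  have h_eq_i : h = i.
    apply: (can (x, h)); last by case=> _ h0; rewrite h0 in h_gt0.
    apply/(in_triangle_latticeE k x h i_gt0 q_gt0).
    by split => //; exact: ltW.
  by rewrite h_eq_i ltxx in h_lt_i.
- move=> no_low [x h] /= /(in_triangle_latticeE k x h i_gt0 q_gt0)
    [h_ge0 h_le_i qr_ge0 qr_le_h] xh_neq0.
  have [h0 | h_neq0] := eqVneq h 0.
    (* on the bottom row only x = 0 fits, since 0 <= q x i <= 0 *)
    exfalso; apply: xh_neq0; rewrite h0 in qr_ge0 qr_le_h *.
    by congr (_, _); nia.
  have [// | h_neq_i] := eqVneq h i.
  by exfalso; apply: (no_low x h); split => //; lia.
Qed.

Lemma coprimez_of_no_low_lattice_point (k i q : int) : 0 < i ->
  (forall x h, ~ low_lattice_point k i q x h) -> coprimez k i.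
Proof.
move=> i_gt0 no_low; apply/negPn/negP => /eqP g_neq1.
have [a k_eq] : exists a, k = a * gcdz k i by apply/dvdzP; exact: dvdz_gcdl.
have [b i_eq] : exists b, i = b * gcdz k i by apply/dvdzP; exact: dvdz_gcdr.
have g_ge0 : 0 <= gcdz k i by [].
move: (gcdz k i) g_neq1 k_eq i_eq g_ge0 => g g_neq1 k_eq i_eq g_ge0.
(* (a, b) = (k, i) / g lies on the segment from the origin to (k, i) *)
apply: (no_low a b); split; nia.
Qed.

Lemma modinv_residue (k i : int) : 1 < i -> coprimez k i ->
  exists c x, [/\ 0 < c, c < i & x * i - k * c = 1].
Proof.
move=> i_gt1 /coprimezP [[u v] /= bezout].
have i_neq0 : i != 0 by rewrite gt_eqF //; lia.
have u_eq := divz_eq (- u) i.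
move: ((- u) %/ i)%Z ((- u) %% i)%Z (modz_ge0 (- u) i_neq0)
  (@ltz_pmod (- u) i ltac:(lia)) u_eq => w c c_ge0 c_lt_i u_eq.
have x_eq : (v - w * k) * i - k * c = 1 by rewrite -bezout; nia.
exists c, (v - w * k); split => //.
(* c = 0 would make i a divisor of 1 *)
rewrite lt_neqAle c_ge0 andbT; apply/eqP => c0; rewrite -c0 in x_eq.
by move: (v - w * k) x_eq => z; have [z_le0 | z_gt0] := lerP z 0; nia.
Qed.

Lemma no_low_lattice_point_of_inverse (k i q c : int) : 0 < i ->
  0 < c -> c < q -> (k * c = - 1 %[mod i])%Z ->
  forall x h, ~ low_lattice_point k i q x h.
Proof.
move=> i_gt0 c_gt0 c_lt_q /eqP; rewrite eqz_mod_dvd => /dvdzP [t kc_eq].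
move=> x h [h_gt0 h_lt_i qr_ge0 qr_le_h].
have r_ge0 : 0 <= x * i - k * h by nia.
have mult_eq : c * (x * i - k * h) - h = (c * x - t * h) * i.
  have -> : c * (x * i - k * h) = c * x * i - (k * c) * h by ring.
  by rewrite (_ : k * c = t * i - 1); [ring | rewrite -kc_eq; ring].
move: (x * i - k * h) (c * x - t * h) r_ge0 qr_le_h mult_eq.
move=> r m r_ge0 qr_le_h.
have [m_ge0 | m_lt0] := leP 0 m; first have [r0 | r_gt0] := eqVneq r 0; nia.
Qed.

Theorem mainTheorem7 (k i q : int) :
  1 < i -> 1 < q ->
  (canonical_poly k%:~R (k%:~R + 1 / q%:~R) i <->
   exists c : int, [/\ 0 < c, c < q & (k * c = - 1 %[mod i])%Z]).
Proof.
move=> i_gt1 q_gt1.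
have [i_gt0 q_gt0] : 0 < i /\ 0 < q by split; lia.
rewrite canonical_polyP //; split.
- move=> no_low.
  have [c [x [c_gt0 c_lt_i xc_eq]]] :=
    modinv_residue i_gt1 (coprimez_of_no_low_lattice_point i_gt0 no_low).
  exists c; split => //.
  + rewrite ltNge; apply/negP => q_le_c.
    apply: (no_low x c); rewrite /low_lattice_point xc_eq mulr1.
    by split => //; exact: ltW.
  + apply/eqP; rewrite eqz_mod_dvd; apply/dvdzP.
    by exists x; rewrite -xc_eq; ring.
- move=> [c [c_gt0 c_lt_q kc_mod]].
  exact: no_low_lattice_point_of_inverse i_gt0 c_gt0 c_lt_q kc_mod.
Qed.
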